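(* For any $\bm x \in \Delta_n \setminus \{\bm e_1,\dots,\bm e_n,\tfrac1n\bm e\}$ and any integer $p\geqslant 2$, $$\frac{p}{p-1}\left[\frac{-\ln\|\bm x\|_p}{1-\|\bm x\|_p}\right] - \ln n\left[1 + \frac{1}{D_p}\right] < 0.$$
   Context: For $\bm x \in \mathbb{R}^n_{\geqslant 0}$ and $p\geqslant 1$, $\|\bm x\|_p = (\sum_{i=1}^n x_i^p)^{1/p}$, and $D_p = n^{1-1/p}-1$. $\Delta_n = \{\bm x \in \mathbb{R}^n_{\geqslant 0} : \sum_{i=1}^n x_i = 1\}$, $\bm e_i$ is the $i$-th standard unit vector and $\bm e$ the all-ones vector in $\mathbb{R}^n$. *)

From HB Require Import structures.
From mathcomp Require Import all_boot all_order all_algebra.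
From mathcomp Require Import all_classical all_reals all_analysis.
Unset Printing Implicit Defensive.
Import Order.TTheory GRing.Theory Num.Theory.
Local Open Scope ring_scope.

Definition pnorm {R : realType} {n : nat} (p : R) (x : 'I_n -> R) : R :=
  powR (\sum_(i < n) powR (x i) p) (p^-1).

Definition Dp {R : realType} (n : nat) (p : R) : R :=
  powR (n%:R) (1 - p^-1) - 1.

Definition in_simplex {R : realType} {n : nat} (x : 'I_n -> R) : Prop :=
  (forall i, 0 <= x i) /\ \sum_(i < n) x i = 1.

Definition unitv {R : realType} {n : nat} (i : 'I_n) : 'I_n -> R :=
  fun j => if j == i then 1 else 0.

Definition baryc {R : realType} (n : nat) : 'I_n -> R :=
  fun _ => (n%:R)^-1.

(* -ln t / (1 - t) is the slope of the chord of the strictly concave function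
   ln between t and 1, so it strictly decreases on (0, 1).  Off the vertices and
   the barycenter of the simplex, ||x||_p lies strictly between n^(1/p - 1) and 1:
   the upper bound because x_i^p <= x_i, the lower one by the tangent-line
   (Bernoulli) bound on sum_i x_i^p.  At t = n^(1/p - 1) the left-hand side of
   the inequality vanishes exactly, since ln n^(1 - 1/p) = (1 - 1/p) ln n. *)

From HB Require Import structures.
From mathcomp Require Import all_boot all_order all_algebra.
From mathcomp Require Import all_classical all_reals all_analysis.
From mathcomp Require Import ring lra zify.
Import Order.TTheory GRing.Theory Num.Theory.
Local Open Scope ring_scope.

Lemma ltr_sum_le_lt {R : numDomainType} {I : finType} {F G : I -> R} (i : I) :
  (forall j, F j <= G j) -> F i < G i -> \sum_j F j < \sum_j G j.
Proof.
move=> FG FGi; rewrite (bigD1 i) // [ltRHS](bigD1 i) //=.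
by rewrite ltr_leD // ler_sum.
Qed.

Section Bernoulli.
Variable R : realDomainType.

Lemma bernoulli_ineq (k : nat) (h : R) : -1 <= h -> 1 + k%:R * h <= (1 + h) ^+ k.
Proof.
move=> h_geN1; elim: k => [|k IHk]; first by rewrite mul0r addr0 expr0.
have hh : 0 <= k%:R * h * h :> R by rewrite -mulrA mulr_ge0 // -expr2 sqr_ge0.
have h1_ge0 : 0 <= 1 + h by lra.
have := ler_wpM2r h1_ge0 IHk.
rewrite exprSr -natr1; nra.
Qed.

Lemma bernoulli_ineq_lt (k : nat) (h : R) : -1 <= h -> h != 0 -> (1 < k)%N ->
  1 + k%:R * h < (1 + h) ^+ k.
Proof.
case: k => [//|k] h_geN1 h0 k_gt1.
have hh : 0 < k%:R * (h * h) :> R.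
  by rewrite mulr_gt0 ?ltr0n // -expr2 exprn_even_gt0.
have h1_ge0 : 0 <= 1 + h by lra.
have := ler_wpM2r h1_ge0 (bernoulli_ineq k h h_geN1).
rewrite exprSr -natr1; nra.
Qed.

End Bernoulli.

Section PowerTangent.
Variables (R : realFieldType) (p : nat) (a y : R).
Hypotheses (a_gt0 : 0 < a) (y_ge0 : 0 <= y).

Let h := y / a - 1.
Let h_geN1 : -1 <= h.
Proof. by rewrite /h lerBrDr addNr divr_ge0 // ltW. Qed.

Let tangentE : a ^+ p.+1 + p.+1%:R * a ^+ p * (y - a) = a ^+ p.+1 * (1 + p.+1%:R * h).
Proof. by rewrite /h exprS; field; rewrite gt_eqF. Qed.

Let powE : y ^+ p.+1 = a ^+ p.+1 * (1 + h) ^+ p.+1.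
Proof. by rewrite -exprMn /h; congr (_ ^+ _); field; rewrite gt_eqF. Qed.

Lemma exprn_tangent_le : a ^+ p.+1 + p.+1%:R * a ^+ p * (y - a) <= y ^+ p.+1.
Proof. by rewrite tangentE powE ler_pM2l ?exprn_gt0 // bernoulli_ineq. Qed.

Lemma exprn_tangent_lt : (0 < p)%N -> y != a ->
  a ^+ p.+1 + p.+1%:R * a ^+ p * (y - a) < y ^+ p.+1.
Proof.
move=> p_gt0 ya; rewrite tangentE powE ltr_pM2l ?exprn_gt0 // bernoulli_ineq_lt //.
have a_neq0 : a != 0 := lt0r_neq0 a_gt0.
by rewrite /h subr_eq0 (can2_eq (divfK a_neq0) (mulfK a_neq0)) mul1r.
Qed.

End PowerTangent.

Section Logarithm.
Variable R : realType.

Lemma ln_lt_subr1 (y : R) : 0 < y -> y != 1 -> ln y < y - 1.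
Proof.
move=> y0 y1; rewrite -ltr_expR lnK ?posrE //.
by rewrite -[ltLHS](subrKC 1) expR_gt1Dx // subr_eq0.
Qed.

(* Both sides are compared with the tangent line of ln at b. *)
Lemma ln_chord1_slope_decreasing (a b : R) : 0 < a -> a < b -> b < 1 ->
  - ln b / (1 - b) < - ln a / (1 - a).
Proof.
move=> a0 ab b1; have b0 : 0 < b := lt_trans a0 ab.
have tangent_a : ln a - ln b < a / b - 1.
  by rewrite -ln_div ?posrE // ln_lt_subr1 ?divr_gt0 // lt_eqF // ltr_pdivrMr // mul1r.
have tangent_1 : - ln b < b^-1 - 1.
  by rewrite -lnV ?posrE // ln_lt_subr1 ?invr_gt0 // invr_eq1 lt_eqF.
have key : (1 - b) * ln a < (1 - a) * ln b.
  have e1 : (1 - b) * (a / b - 1) + (b - a) * (b^-1 - 1) = 0.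
    by field; rewrite gt_eqF.
  have : 0 < (1 - b) * (a / b - 1 - (ln a - ln b)) by rewrite mulr_gt0 ?subr_gt0.
  have : 0 < (b - a) * (b^-1 - 1 + ln b) by rewrite mulr_gt0 ?subr_gt0 //; lra.
  nra.
rewrite ltr_pdivrMr ?subr_gt0 // mulrAC ltr_pdivlMr ?subr_gt0 //; nra.
Qed.

Lemma ln_chord1_Dp_bound (n : nat) (q t : R) : (1 < n)%N -> 1 < q ->
  (n%:R `^ (1 - q^-1))^-1 < t -> t < 1 ->
  q / (q - 1) * (- ln t / (1 - t)) - ln n%:R * (1 + (Dp n q)^-1) < 0.
Proof.
move=> n_gt1 q_gt1; rewrite /Dp; set m := n%:R `^ (1 - q^-1) => m_lt_t t_lt1.
have q_gt0 : 0 < q := lt_trans ltr01 q_gt1.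
have lnn_gt0 : 0 < ln (n%:R : R) by rewrite ln_gt0 // ltr1n.
have exponent_gt0 : 0 < 1 - q^-1 by rewrite subr_gt0 invf_lt1.
have m_gt1 : 1 < m by rewrite /m /powR gt_eqF ?ltr0n 1?ltnW // expR_gt1 mulr_gt0.
have m_gt0 : 0 < m := lt_trans ltr01 m_gt1.
have m_inv_gt0 : 0 < m^-1 by rewrite invr_gt0.
have := ln_chord1_slope_decreasing m^-1 t m_inv_gt0 m_lt_t t_lt1.
rewrite lnV ?posrE // opprK ln_powR => slope_lt.
have -> : ln n%:R * (1 + (m - 1)^-1) = q / (q - 1) * ((1 - q^-1) * ln n%:R / (1 - m^-1)).
  by field; rewrite !subr_eq0 !gt_eqF.
by rewrite subr_lt0 ltr_pM2l // divr_gt0 ?subr_gt0.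
Qed.

End Logarithm.

Section Simplex.
Context {R : realType} {n : nat} {x : 'I_n -> R}.
Hypothesis x_simplex : in_simplex x.

Let x_ge0 : forall i, 0 <= x i. Proof. by case: x_simplex. Qed.
Let x_sum1 : \sum_i x i = 1. Proof. by case: x_simplex. Qed.

Lemma simplex_le1 (i : 'I_n) : x i <= 1.
Proof. by rewrite -x_sum1 (bigD1 i) //= lerDl sumr_ge0. Qed.

Lemma simplex_size_gt0 : (0 < n)%N.
Proof. by case: n x x_sum1 => // ? /[!big_ord0] /eqP; rewrite eq_sym oner_eq0. Qed.

Lemma simplex_unitv (i : 'I_n) : x i = 1 -> x = unitv i.
Proof.
move=> xi1; apply/funext => j; rewrite /unitv; case: eqP => [-> //|/eqP ji].
have rest0 : \sum_(k | k != i) x k = 0 by move: x_sum1; rewrite (bigD1 i) //= xi1; lra.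
exact: (psumr_eq0P (fun k _ => x_ge0 k) rest0).
Qed.

(* Summing the tangent lines of y |-> y ^+ p at 1/n over the simplex gives n^(1-p). *)
Lemma simplex_sum_exprn_gt_baryc (p : nat) :
  x <> baryc n -> (1 < p)%N -> n%:R * n%:R ^- p < \sum_i x i ^+ p.
Proof.
move=> x_not_baryc; case: p => [//|p] p_gt1.
have n_gt0 : (0 : R) < n%:R by rewrite ltr0n simplex_size_gt0.
set a : R := n%:R^-1; have a_gt0 : 0 < a by rewrite invr_gt0.
have [j xj_neq] : exists j, x j != a.
  apply/existsP; apply: contra_notT x_not_baryc => /existsPn x_eq.
  by apply/funext => i; apply/eqP/negbNE/x_eq.
have tangent_sum : \sum_i (a ^+ p.+1 + p.+1%:R * a ^+ p * (x i - a)) = n%:R * a ^+ p.+1.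
  rewrite big_split /= -mulr_sumr sumrB x_sum1 !sumr_const card_ord.
  by rewrite /a; field; rewrite gt_eqF.
rewrite -exprVn -tangent_sum; apply: (ltr_sum_le_lt j) => [i|].
  exact: exprn_tangent_le.
exact: exprn_tangent_lt.
Qed.

Hypothesis x_not_vertex : forall i, x <> unitv i.

Lemma simplex_interior_coord : exists i, 0 < x i < 1.
Proof.
have [i /andP[_ xi_gt0]] : exists i, true && (0 < x i).
  by apply: psumr_neq0P => [i _|]; rewrite ?x_sum1 ?x_ge0 //; exact/eqP/oner_neq0.
exists i; rewrite xi_gt0 lt_neqAle simplex_le1 andbT /=.
by apply/eqP => /simplex_unitv; exact: x_not_vertex.
Qed.

Lemma simplex_size_gt1 : (1 < n)%N.
Proof.
have [i /andP[xi_gt0 xi_lt1]] := simplex_interior_coord.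
have [j /andP[ji _]] : exists j, (j != i) && (0 < x j).
  apply: psumr_neq0P => [j _|]; first exact: x_ge0.
  by move: x_sum1; rewrite (bigD1 i) //=; lra.
by move: ji (ltn_ord i) (ltn_ord j); rewrite -val_eqE /=; lia.
Qed.

Lemma simplex_sum_exprn_lt1 (p : nat) : (1 < p)%N -> \sum_i x i ^+ p < 1.
Proof.
move=> p_gt1; have [i /andP[xi_gt0 xi_lt1]] := simplex_interior_coord.
rewrite -x_sum1; apply: (ltr_sum_le_lt i); last by rewrite ltr_iXnr.
by move=> j; rewrite ler_iXnr ?x_ge0 ?simplex_le1 // ltnW.
Qed.

End Simplex.

Section PNorm.
Context {R : realType} {n : nat} {x : 'I_n -> R} (p : nat).
Hypotheses (x_simplex : in_simplex x) (p_gt1 : (1 < p)%N).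

Let p_gt0 : (0 : R) < p%:R.
Proof. by rewrite ltr0n ltnW. Qed.
Let p_inv_gt0 : (0 : R) < p%:R^-1.
Proof. by rewrite invr_gt0. Qed.
Let sum_ge0 : 0 <= \sum_i x i ^+ p.
Proof. by rewrite sumr_ge0 // => i _; rewrite exprn_ge0 //; case: x_simplex. Qed.

Lemma pnorm_natE : pnorm p%:R x = (\sum_i x i ^+ p) `^ p%:R^-1.
Proof.
rewrite /pnorm; congr powR; apply: eq_bigr => i _.
by rewrite powR_mulrn //; case: x_simplex.
Qed.

Lemma simplex_pnorm_lt1 : (forall i, x <> unitv i) -> pnorm p%:R x < 1.
Proof.
move=> x_not_vertex; rewrite pnorm_natE.
have := gt0_ltr_powR p_inv_gt0 sum_ge0 ler01 (simplex_sum_exprn_lt1 x_simplex x_not_vertex p p_gt1).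
by rewrite powR1.
Qed.

Lemma simplex_pnorm_gt_baryc : x <> baryc n -> (n%:R `^ (1 - p%:R^-1))^-1 < pnorm p%:R x.
Proof.
move=> x_not_baryc.
have n_gt0 : (0 : R) < n%:R by rewrite ltr0n (simplex_size_gt0 x_simplex).
have -> : ((n%:R : R) `^ (1 - p%:R^-1))^-1 = (n%:R * n%:R ^- p) `^ p%:R^-1.
  rewrite -powRN -(powR_invn _ (ltW n_gt0)) -[X in X * _](powRr1 (ltW n_gt0)).
  rewrite -powRD ?(gt_eqF n_gt0) ?implybT // -powRrM; congr powR.
  by field; rewrite gt_eqF.
rewrite pnorm_natE; apply: gt0_ltr_powR => //.
  by rewrite nnegrE mulr_ge0 ?invr_ge0 ?exprn_ge0 ?ltW.
exact: simplex_sum_exprn_gt_baryc.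
Qed.

End PNorm.

Theorem lemma1 (R : realType) (n : nat) (x : 'I_n -> R) (p : nat) :
  in_simplex x ->
  (forall i : 'I_n, x <> unitv i) ->
  x <> baryc n ->
  (2 <= p)%N ->
  (p%:R / (p%:R - 1)) * (- ln (pnorm p%:R x) / (1 - pnorm p%:R x))
    - ln (n%:R : R) * (1 + (Dp n (p%:R : R))^-1) < 0.
Proof.
move=> x_simplex x_not_vertex x_not_baryc p_gt1.
apply: ln_chord1_Dp_bound.
- exact: simplex_size_gt1 x_simplex x_not_vertex.
- by rewrite ltr1n.
- exact: simplex_pnorm_gt_baryc.
- exact: simplex_pnorm_lt1.
Qed.
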